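(* There is an absolute constant $d$ such that the following holds. Let $N=A+B>0$ with integers $A\ge B\ge0$. Let $X\in\{0,1\}^N$ be chosen uniformly at random among all strings with exactly $A$ ones and $B$ zeros. Let $M$ be the (1-indexed) position of the $(\lfloor N/2\rfloor+1)$-st one in $X$ if $A>B$, and $M=N$ if $A=B$. Then for every $r\ge1$, $$\Pr_X\left[\,\left|M-\frac{N^2}{2A}\right|>d\sqrt{rN}\,\right]\le 2^{-r}.$$ *)

From mathcomp Require Import all_boot.
From Stdlib Require Import Reals.

Set Implicit Arguments.
Unset Strict Implicit.
Unset Printing Implicit Defensive.

Definition ones_pos (N : nat) (X : N.-tuple bool) : seq nat :=
  [seq i <- iota 1 N | nth false X i.-1].

(* M: position (1-indexed) of the (floor(N/2)+1)-st one if A > B, and N if A = B.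
   Here A = number of ones, B = N - A. *)
Definition M_of (N A : nat) (X : N.-tuple bool) : nat :=
  if (N - A < A)%N then nth 0%N (ones_pos X) N./2 else N.

Definition strings_with (N A : nat) : {set N.-tuple bool} :=
  [set X : N.-tuple bool | count (fun b : bool => b) X == A].

Definition unif_prob (N A : nat) (E : pred (N.-tuple bool)) : R :=
  (INR #|[set X in strings_with N A | E X]| / INR #|strings_with N A|)%R.

(* For a string with A > B, M <= m holds exactly when the first m positions carry
   more than N/2 ones.  The expected number of ones there is m A / N, which equals
   N/2 at m = mu := N^2 / (2A); since A/N >= 1/2, a deviation |M - mu| > t forces
   the number of ones (or of zeros) in the prefix of length floor(mu -/+ t) to
   exceed its mean by at least t/4.

   These hypergeometric tails are bounded by double counting: if c of the N bits
   equal b and at least a of them lie in the first m positions, then the string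
   has C(a, j) j-subsets of such positions, whence
   #strings * C(a, j) <= C(m, j) C(N - j, c - j).  With p = m c / N, s = a - p and
   j = floor(s/2), the ratio of binomials is at most (p / (p + s/2))^j
   <= exp(-s^2 / (8N)), which is exp(-2r) once s >= 5 sqrt(rN), i.e. d = 20.
   The two tails together give 2 exp(-2r) <= 2^-r. *)

From mathcomp Require Import all_boot zify.
From Stdlib Require Import Reals Lra.
From Stdlib Require ZArith.
Set Implicit Arguments. Unset Strict Implicit. Unset Printing Implicit Defensive.

Definition pos_of N (b : bool) (X : N.-tuple bool) : {set 'I_N} :=
  [set i | tnth X i == b].

Definition init_seg N m : {set 'I_N} := [set i : 'I_N | i < m].

Lemma card_set_ord n (P : pred 'I_n) : #|[set i | P i]| = count P (enum 'I_n).
Proof.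
rewrite -sum1_card -sum1_count big_enum_cond /=.
by apply: eq_bigl => i; rewrite inE.
Qed.

Lemma card_init_seg N m : m <= N -> #|init_seg N m| = m.
Proof.
move=> le_mN; rewrite card_set_ord.
rewrite -(count_map val (fun i => i < m)) val_enum_ord -size_filter.
by rewrite (filter_iota_ltn 0 le_mN) size_iota.
Qed.

Lemma count_tuple_pos_of N (X : N.-tuple bool) :
  count (fun b : bool => b) X = #|pos_of true X|.
Proof.
rewrite card_set_ord -{1}(map_tnth_enum X) count_map.
by apply: eq_count => i; rewrite /= eqb_id.
Qed.

Lemma card_pos_of_false N (X : N.-tuple bool) :
  #|pos_of false X| = N - #|pos_of true X|.
Proof.
rewrite cardsCs card_ord; congr (_ - _); apply: eq_card => i.
by rewrite !inE; case: (tnth X i).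
Qed.

Lemma card_pos_of_init_seg N m (X : N.-tuple bool) :
  #|pos_of true X :&: init_seg N m| + #|pos_of false X :&: init_seg N m|
  = #|init_seg N m|.
Proof.
rewrite -(cardsID (pos_of true X) (init_seg N m)) setIC; congr (_ + _).
by apply: eq_card => i; rewrite !inE; case: (tnth X i) => //=; rewrite andbF.
Qed.

Lemma pos_of_inj N b : injective (@pos_of N b).
Proof.
move=> X Y /setP eqXY; apply: eq_from_tnth => i.
by move: (eqXY i); rewrite !inE; case: b {eqXY}; case: (tnth X i); case: (tnth Y i).
Qed.

Lemma bin_le_card_strings_with N A : 'C(N, A) <= #|strings_with N A|.
Proof.
rewrite -[N in 'C(N, _)]card_ord -card_draws.
pose f (D : {set 'I_N}) : N.-tuple bool := [tuple (i \in D) | i < N].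
have f_inj : injective f.
  move=> D1 D2 eqf; apply/setP => i.
  by rewrite -(tnth_mktuple (fun i => i \in D1) i) -(tnth_mktuple (fun i => i \in D2) i) -/(f D1) eqf.
rewrite -(card_imset _ f_inj); apply/subset_leq_card/subsetP => X /imsetP[D].
rewrite !inE => /eqP cardD ->; rewrite count_tuple_pos_of -cardD; apply/eqP/eq_card => i.
by rewrite !inE tnth_mktuple eqb_id.
Qed.

Lemma sorted_nth_leqE (s : seq nat) K m : sorted ltn s -> K < size s ->
  (nth 0 s K <= m) = (K < count (fun k => k <= m) s).
Proof.
elim: s K => [|x s IHs] K //= sorted_xs lt_Ks.
have x_lt_s : all (ltn x) s := order_path_min ltn_trans sorted_xs.
have count0 : m < x -> count (fun k => k <= m) s = 0.
  move=> lt_mx; apply/eqP; rewrite -leqn0 leqNgt -has_count; apply/hasPn => y /(allP x_lt_s).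
  by move/(ltn_trans lt_mx); rewrite ltnNge.
case: K lt_Ks => [|K] lt_Ks /=; case: (leqP x m) => le_xm //=; first by rewrite count0.
  by rewrite IHs ?(path_sorted sorted_xs) // add1n ltnS.
by rewrite IHs ?(path_sorted sorted_xs) // count0.
Qed.

Lemma sorted_ones_pos N (X : N.-tuple bool) : sorted ltn (ones_pos X).
Proof. exact/(sorted_filter ltn_trans)/iota_ltn_sorted. Qed.

Lemma size_ones_pos N (X : N.-tuple bool) :
  size (ones_pos X) = count (fun b : bool => b) X.
Proof.
rewrite /ones_pos size_filter (iotaDl 1 0) count_map.
by rewrite -{2}(mkseq_nth false X) size_tuple /mkseq count_map.
Qed.

Lemma ones_pos_leq N (X : N.-tuple bool) k : k \in ones_pos X -> k <= N.
Proof. by rewrite mem_filter mem_iota add1n ltnS => /andP[_ /andP[]]. Qed.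

Lemma count_ones_pos_leq N (X : N.-tuple bool) m :
  count (fun k => k <= m) (ones_pos X) = #|pos_of true X :&: init_seg N m|.
Proof.
rewrite count_filter (iotaDl 1 0) count_map.
rewrite (_ : #|_ :&: _| = #|[set i : 'I_N | nth false X i && (i < m)]|); last first.
  by apply: eq_card => i; rewrite !inE eqb_id (tnth_nth false).
rewrite card_set_ord -(count_map val (fun i => nth false X i && (i < m))) val_enum_ord.
by apply: eq_count => i /=; rewrite andbC.
Qed.

Lemma card_pos_of_superset N b c (T : {set 'I_N}) :
  #|[set X : N.-tuple bool | (#|pos_of b X| == c) && (T \subset pos_of b X)]|
  <= 'C(N - #|T|, c - #|T|).
Proof.
set E := [set X | _].
pose f X := pos_of b X :\: T.
have f_inj : {in E &, injective f}.
  move=> X Y; rewrite !inE => /andP[_ sTX] /andP[_ sTY] eqf; apply: (@pos_of_inj N b).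
  by rewrite -(setID (pos_of b X) T) -(setID (pos_of b Y) T) (setIidPr sTX) (setIidPr sTY) -/(f X) eqf.
have -> : N - #|T| = #|~: T| by rewrite -[N in N - _]card_ord -(cardsC T) addKn.
rewrite -(card_in_imset f_inj) -cards_draws.
apply/subset_leq_card/subsetP => D /imsetP[X]; rewrite /E inE => /andP[/eqP cardX sTX] ->.
by rewrite inE /f cardsD (setIidPr sTX) cardX eqxx andbT setDE subsetIr.
Qed.

Definition heavy_prefix N b c m a : {set N.-tuple bool} :=
  [set X | (#|pos_of b X| == c) && (a <= #|pos_of b X :&: init_seg N m|)].

Lemma card_heavy_prefix_bin N b c m a j : m <= N -> j <= a ->
  #|heavy_prefix N b c m a| * 'C(a, j) <= 'C(m, j) * 'C(N - j, c - j).
Proof.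
move=> le_mN le_ja.
pose inside X := pos_of b X :&: init_seg N m.
apply: (@leq_trans (\sum_(X : N.-tuple bool | #|pos_of b X| == c) 'C(#|inside X|, j))).
  rewrite -sum_nat_const big_mkcond [X in _ <= X]big_mkcond /=.
  apply: leq_sum => X _; rewrite inE.
  by case: (_ == c) => //=; case: ifP => // heavyX; apply: leq_bin2l.
rewrite (eq_bigr (fun X => \sum_(T : {set 'I_N} | (T \subset inside X) && (#|T| == j)) 1)); last first.
  by move=> X _; rewrite sum1dep_card cards_draws.
rewrite (exchange_big_dep (fun T : {set 'I_N} => (T \subset init_seg N m) && (#|T| == j))) /=; last first.
  by move=> X T _ /andP[sTX ->]; rewrite andbT (subset_trans sTX) ?subsetIr.
rewrite -[in 'C(m, j)](card_init_seg le_mN) -cards_draws -sum1dep_card big_distrl /= mul1n.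
apply: leq_sum => T /andP[_ /eqP <-]; rewrite sum1dep_card.
apply: leq_trans (card_pos_of_superset b c T); apply/subset_leq_card/subsetP => X.
by rewrite !inE => /andP[-> /andP[sTX _]]; rewrite (subset_trans sTX) ?subsetIl.
Qed.

Lemma mul_bin_subS N c j : j < c ->
  (N - j) * 'C(N - j.+1, c - j.+1) = (c - j) * 'C(N - j, c - j).
Proof.
move=> lt_jc; have := mul_bin_diag (N - j) (c - j.+1).
by rewrite -subnS -subSn.
Qed.

Lemma half_bounds N : N./2.*2 <= N < N./2.*2 + 2.
Proof. by have := odd_double_half N; case: (odd N) => /= <-; lia. Qed.

Lemma M_of_leq N A (X : N.-tuple bool) : M_of A X <= N.
Proof.
rewrite /M_of; case: ifP => // _.
have [lt_half | ge_half] := ltnP N./2 (size (ones_pos X)).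
  exact/ones_pos_leq/mem_nth.
by rewrite nth_default.
Qed.

Lemma M_of_leqE N A (X : N.-tuple bool) m :
  N - A < A -> X \in strings_with N A ->
  (M_of A X <= m) = (N./2 < #|pos_of true X :&: init_seg N m|).
Proof.
move=> lt_BA; rewrite inE => /eqP countX.
rewrite /M_of lt_BA sorted_nth_leqE ?sorted_ones_pos ?count_ones_pos_leq //.
by rewrite size_ones_pos countX; have := half_bounds N; lia.
Qed.

Lemma M_of_gt_heavy_prefix N A (X : N.-tuple bool) m :
  N - A < A -> X \in strings_with N A -> m <= N -> m < M_of A X ->
  X \in heavy_prefix N false (N - A) m (m - N./2).
Proof.
move=> lt_BA SX le_mN; rewrite ltnNge M_of_leqE // -leqNgt => ones_le.
have := card_pos_of_init_seg m X; rewrite (card_init_seg le_mN) => split_m.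
move: SX; rewrite !inE card_pos_of_false -count_tuple_pos_of => /eqP ->.
by rewrite eqxx /=; move: ones_le split_m; set u := #|_ :&: _|; set v := #|_ :&: _|; lia.
Qed.

Lemma M_of_le_heavy_prefix N A (X : N.-tuple bool) m :
  N - A < A -> X \in strings_with N A -> M_of A X <= m ->
  X \in heavy_prefix N true A m N./2.+1.
Proof.
move=> lt_BA SX; rewrite M_of_leqE // inE -count_tuple_pos_of => ->.
by move: SX; rewrite inE => /eqP ->; rewrite eqxx.
Qed.

Local Open Scope R_scope.

Lemma INR_addn (a b : nat) : INR (a + b)%nat = INR a + INR b.
Proof. by rewrite -plusE plus_INR. Qed.

Lemma INR_muln (a b : nat) : INR (a * b)%nat = INR a * INR b.
Proof. by rewrite -multE mult_INR. Qed.

Lemma INR_subn (a b : nat) : (b <= a)%nat -> INR (a - b)%nat = INR a - INR b.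
Proof. by move/leP => le_ba; rewrite -minusE minus_INR. Qed.

Lemma INR_leq (a b : nat) : (a <= b)%nat -> INR a <= INR b.
Proof. by move/leP; apply: le_INR. Qed.

Lemma INR_ltn (a b : nat) : (a < b)%nat -> INR a < INR b.
Proof. by move/ltP; apply: lt_INR. Qed.

Lemma exp_le (x y : R) : x <= y -> exp x <= exp y.
Proof. by case=> [/exp_increasing/Rlt_le | ->]; [|apply: Rle_refl]. Qed.

Lemma exp_pow x n : exp x ^ n = exp (INR n * x).
Proof.
elim: n => [|n IHn]; first by rewrite Rmult_0_l exp_0.
by rewrite [_ ^ _.+1]/= IHn -exp_plus S_INR; congr exp; ring.
Qed.

Lemma INR_floor (x : R) : 0 <= x -> exists n : nat, INR n <= x < INR n + 1.
Proof.
move=> x_ge0; have [up_gt up_le] := archimed x.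
have up_gt0 : (0 < up x)%Z by apply: lt_IZR; lra.
exists (Z.to_nat (up x - 1)).
rewrite INR_IZR_INZ ZArith.Znat.Z2Nat.id ?minus_IZR; [lra | lia].
Qed.

Lemma INR_half_bounds N : 2 * INR N./2 <= INR N < 2 * INR N./2 + 2.
Proof.
have /andP[lo hi] := half_bounds N; rewrite -mul2n in lo hi.
have := INR_leq lo; have := INR_ltn hi; rewrite INR_addn !INR_muln /=; lra.
Qed.

Lemma ratio_step_le (n m c p s j : R) :
  0 < n -> 0 <= j -> j <= s / 2 -> 0 < s -> j <= m <= n -> j <= c <= n ->
  p * n = m * c ->
  (m - j) * (c - j) <= p / (p + s / 2) * (p + s - j) * (n - j).
Proof.
move=> n_gt0 j_ge0 j_le_s s_gt0 [j_le_m m_le_n] [j_le_c c_le_n] def_p.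
have p_ge0 : 0 <= p.
  apply: (Rmult_le_reg_r n) => //; rewrite def_p Rmult_0_l; nra.
have drift : (m - j) * (c - j) <= p * (n - j).
  apply: (Rmult_le_reg_r n) => //.
  have -> : p * (n - j) * n = m * c * (n - j) by rewrite Rmult_assoc (Rmult_comm _ n) -Rmult_assoc def_p.
  have : 0 <= j * (n * (c - j) - m * (c - n)) by apply: Rmult_le_pos; nra.
  nra.
have p_le : p <= p / (p + s / 2) * (p + s - j).
  have -> : p / (p + s / 2) * (p + s - j) = p + p * (s / 2 - j) / (p + s / 2) by field; lra.
  have : 0 <= p * (s / 2 - j) / (p + s / 2).
    by apply: Rmult_le_pos; [nra | apply/Rlt_le/Rinv_0_lt_compat; lra].
  lra.
apply: (Rle_trans _ _ _ drift); apply: Rmult_le_compat_r; lra.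
Qed.

Lemma ratio_pow_le_exp (n p s : R) (J : nat) :
  0 <= p -> 4 <= s -> p + s <= n -> s / 2 - 1 < INR J ->
  (p / (p + s / 2)) ^ J <= exp (- s ^ 2 / (8 * n)).
Proof.
move=> p_ge0 s_ge4 ps_le_n J_gt.
have ratio_le : p / (p + s / 2) <= exp (- (s / (2 * n))).
  apply: Rle_trans (exp_ineq1_le _).
  apply: (Rmult_le_reg_r (p + s / 2)); first lra.
  have -> : p / (p + s / 2) * (p + s / 2) = p by field; lra.
  have : s / (2 * n) * (p + s / 2) <= s / 2.
    apply: (Rmult_le_reg_r (2 * n)); first lra.
    have -> : s / (2 * n) * (p + s / 2) * (2 * n) = s * (p + s / 2) by field; lra.
    nra.
  nra.
apply: (Rle_trans _ (exp (- (s / (2 * n))) ^ J)).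
  by apply: pow_incr; split; [apply: Rmult_le_pos; [|apply/Rlt_le/Rinv_0_lt_compat]; lra|].
rewrite exp_pow; apply: exp_le.
have -> : - s ^ 2 / (8 * n) = - (s / 4 * (s / (2 * n))) by field; lra.
have : s / 4 * (s / (2 * n)) <= INR J * (s / (2 * n)).
  by apply: Rmult_le_compat_r; [apply: Rmult_le_pos; [|apply/Rlt_le/Rinv_0_lt_compat]; lra | lra].
lra.
Qed.

Section HypergeometricTail.
Variables (N c m : nat).
Hypotheses (N_gt0 : (0 < N)%nat) (m_le_N : (m <= N)%nat) (c_le_N : (c <= N)%nat).
Let p := INR m * INR c / INR N.

Lemma bin_ratio_le a J : (a <= m)%nat -> (a <= c)%nat -> (J <= a)%nat ->
  INR J <= (INR a - p) / 2 -> 0 < INR a - p ->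
  INR ('C(m, J) * 'C(N - J, c - J)) <=
  INR ('C(a, J) * 'C(N, c)) * (p / (p + (INR a - p) / 2)) ^ J.
Proof.
move=> le_am le_ac + + s_gt0; set s := INR a - p; set q := p / (p + s / 2).
elim: J => [|j IHj] le_ja le_js; first by rewrite !bin0 !subn0 /=; lra.
have lt_jm : (j < m)%nat by apply: leq_trans le_am.
have lt_jc : (j < c)%nat by apply: leq_trans le_ac.
have lt_jN : (j < N)%nat by apply: leq_trans m_le_N.
have IH := IHj (ltnW le_ja) (Rle_trans _ _ _ (INR_leq (leqnSn j)) le_js).
have stepL : (j.+1 * (N - j) * ('C(m, j.+1) * 'C(N - j.+1, c - j.+1))
              = (m - j) * (c - j) * ('C(m, j) * 'C(N - j, c - j)))%nat.
  by rewrite mulnACA mul_bin_left mul_bin_subS // mulnACA.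
have stepR : (j.+1 * 'C(a, j.+1) = (a - j) * 'C(a, j))%nat by apply: mul_bin_left.
have N_gtr : 0 < INR N by apply/lt_0_INR/ltP.
have le_jm := INR_leq (ltnW lt_jm); have le_jc := INR_leq (ltnW lt_jc).
have j_ge0 := pos_INR j; rewrite S_INR in le_js.
have drift : (INR m - INR j) * (INR c - INR j) <= q * (INR a - INR j) * (INR N - INR j).
  have -> : INR a = p + s by rewrite /s; ring.
  apply: ratio_step_le; try split; try lra; try exact: INR_leq.
  by rewrite /p; field; lra.
move: stepL stepR => /(f_equal INR) stepL /(f_equal INR) stepR.
rewrite !INR_muln !INR_subn ?S_INR in stepL stepR IH *; try exact: ltnW.
have D_gt0 : 0 < (INR j + 1) * (INR N - INR j) by have := INR_ltn lt_jN; nra.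
apply: (Rmult_le_reg_l _ _ _ D_gt0); rewrite stepL.
have -> : (INR j + 1) * (INR N - INR j) * (INR 'C(a, j.+1) * INR 'C(N, c) * q ^ j.+1)
          = (INR j + 1) * INR 'C(a, j.+1) * INR 'C(N, c) * q ^ j * q * (INR N - INR j).
  by rewrite [q ^ j.+1]/=; ring.
rewrite stepR.
have mc_ge0 : 0 <= (INR m - INR j) * (INR c - INR j) by nra.
have bound := Rmult_le_compat _ _ _ _ (Rmult_le_pos _ _ (pos_INR _) (pos_INR _)) mc_ge0 IH drift.
by apply: (Rle_trans _ _ _ (Req_le _ _ _) (Rle_trans _ _ _ bound (Req_le _ _ _))); ring.
Qed.

Lemma card_heavy_prefix_le b a : 4 <= INR a - p ->
  INR #|heavy_prefix N b c m a| <= INR 'C(N, c) * exp (- (INR a - p) ^ 2 / (8 * INR N)).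
Proof.
set s := INR a - p => s_ge4; have def_s : s = INR a - p := erefl.
have [/andP[le_am le_ac] | heavy_prefix0] := boolP ((a <= m) && (a <= c))%nat; last first.
  suff -> : heavy_prefix N b c m a = set0.
    by rewrite cards0; apply: Rmult_le_pos; [apply: pos_INR | apply/Rlt_le/exp_pos].
  apply/setP => X; rewrite !inE; apply/negbTE/negP => /andP[/eqP cardX heavyX].
  move/negP: heavy_prefix0; apply; apply/andP; split; apply: (leq_trans heavyX).
    by rewrite -[leqRHS](card_init_seg m_le_N) subset_leq_card ?subsetIr.
  by rewrite -cardX subset_leq_card ?subsetIl.
have N_gtr : 0 < INR N by apply/lt_0_INR/ltP.
have p_ge0 : 0 <= p.
  by apply: Rmult_le_pos; [apply: Rmult_le_pos; apply: pos_INR | apply/Rlt_le/Rinv_0_lt_compat].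
have [J [J_le J_gt]] := @INR_floor (s / 2) ltac:(lra).
have le_Ja : (J <= a)%nat by apply/leP/INR_le; lra.
have bin_gt0 : 0 < INR 'C(a, J) by apply/lt_0_INR/ltP; rewrite bin_gt0.
have ps_le_N : p + s <= INR N by have := INR_leq (leq_trans le_am m_le_N); lra.
have := INR_leq (card_heavy_prefix_bin b c m_le_N le_Ja).
have := bin_ratio_le le_am le_ac le_Ja J_le ltac:(lra).
have := (@ratio_pow_le_exp _ _ _ J) p_ge0 s_ge4 ps_le_N ltac:(lra).
rewrite !INR_muln -/s; set E := exp _; set C := INR 'C(N, c) => pow_le ratio_le dc.
apply: (Rmult_le_reg_r _ _ _ bin_gt0); apply: (Rle_trans _ _ _ dc); apply: (Rle_trans _ _ _ ratio_le).
rewrite [C * E * _]Rmult_comm -Rmult_assoc; apply: Rmult_le_compat_l => //.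
by apply: Rmult_le_pos; [apply: Rlt_le | apply: pos_INR].
Qed.

Lemma card_heavy_prefix_le_exp b a r : 1 <= r -> 5 * sqrt (r * INR N) <= INR a - p ->
  INR #|heavy_prefix N b c m a| <= INR 'C(N, c) * exp (- (2 * r)).
Proof.
move=> r_ge1 s_ge.
have N_ge1 : 1 <= INR N by apply: (INR_leq N_gt0).
have rN_ge1 : 1 <= r * INR N by nra.
have sqrt_ge1 : 1 <= sqrt (r * INR N) by rewrite -sqrt_1; apply: sqrt_le_1_alt.
have sqrt_sq : sqrt (r * INR N) * sqrt (r * INR N) = r * INR N by apply: sqrt_sqrt; lra.
apply: (Rle_trans _ _ _ (@card_heavy_prefix_le b a ltac:(lra))).
apply/Rmult_le_compat_l/exp_le; first exact: pos_INR.
apply: (Rmult_le_reg_r (8 * INR N)); first lra.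
have -> : - (INR a - p) ^ 2 / (8 * INR N) * (8 * INR N) = - (INR a - p) ^ 2 by field; lra.
nra.
Qed.

End HypergeometricTail.

Definition Rltb (x y : R) : bool := if Rlt_dec x y then true else false.

Lemma RltbP x y : reflect (x < y)%R (Rltb x y).
Proof. by rewrite /Rltb; case: Rlt_dec => ?; constructor. Qed.

Section MedianTail.
Variables (N A : nat) (r : R).
Hypotheses (lt_BA : (N - A < A)%nat) (le_AN : (A <= N)%nat) (r_ge1 : 1 <= r).
Let t := 20 * sqrt (r * INR N).
Let mu := INR N ^ 2 / (2 * INR A).

Lemma ones_ratio_bounds : 1 / 2 < INR A / INR N <= 1.
Proof.
have N_gt0 : 0 < INR N by apply/lt_0_INR/ltP; lia.
have B_lt_A : INR N - INR A < INR A by rewrite -INR_subn //; apply: INR_ltn.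
have A_le_N := INR_leq le_AN.
have cancelN : INR A / INR N * INR N = INR A by field; lra.
by split; [apply: (Rmult_lt_reg_r (INR N)) | apply: (Rmult_le_reg_r (INR N))]; rewrite ?cancelN; lra.
Qed.

Lemma ones_ratio_mu : INR A / INR N * mu = INR N / 2.
Proof.
have N_gt0 : 0 < INR N by apply/lt_0_INR/ltP; lia.
have A_gt0 : 0 < INR A by apply/lt_0_INR/ltP; lia.
by rewrite /mu; field; lra.
Qed.

Lemma t_ge20 : 20 <= t.
Proof.
have N_ge1 : 1 <= INR N by apply: (@INR_leq 1); lia.
have : 1 <= sqrt (r * INR N) by rewrite -sqrt_1; apply: sqrt_le_1_alt; nra.
rewrite /t; lra.
Qed.

Lemma card_M_of_gt :
  INR #|[set X in strings_with N A | Rltb (mu + t) (INR (M_of A X))]|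
  <= INR 'C(N, A) * exp (- (2 * r)).
Proof.
have [y_gt y_le] := ones_ratio_bounds; have y_mu := ones_ratio_mu.
have t_sqrt : 5 * sqrt (r * INR N) = t / 4 by rewrite /t; field.
have t_ge := t_ge20.
have [K_le K_gt] := INR_half_bounds N.
have N_gt0 : (0 < N)%nat by lia.
have mu_ge : INR N / 2 <= mu by have := pos_INR N; nra.
have [N_le | N_gt] := Rle_lt_dec (INR N) (mu + t).
  suff -> : [set X in strings_with N A | Rltb (mu + t) (INR (M_of A X))] = set0.
    by rewrite cards0; apply: Rmult_le_pos; [apply: pos_INR | apply/Rlt_le/exp_pos].
  apply/setP => X; rewrite !inE; apply/negbTE/negP => /andP[_ /RltbP M_gt].
  by have := INR_leq (M_of_leq A X); lra.
have [m [m_le m_gt]] := @INR_floor (mu + t) ltac:(nra).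
have lt_mN : (m < N)%nat by apply/ltP/INR_lt; lra.
have le_Km : (N./2 <= m)%nat by apply/leP/INR_le; lra.
apply: (Rle_trans _ (INR #|heavy_prefix N false (N - A)%nat m (m - N./2)%nat|)).
  apply/INR_leq/subset_leq_card/subsetP => X; rewrite inE => /andP[SX /RltbP M_gt].
  by apply: M_of_gt_heavy_prefix (ltnW lt_mN) _ => //; apply/ltP/INR_lt; lra.
rewrite -(bin_sub le_AN).
apply: card_heavy_prefix_le_exp => //; [exact: ltnW | exact: leq_subr |].
rewrite t_sqrt INR_subn // INR_subn //.
have -> : INR m * (INR N - INR A) / INR N = INR m - INR m * (INR A / INR N)
  by field; apply: not_0_INR; lia.
have : (mu + t - 1) * (INR A / INR N) <= INR m * (INR A / INR N) by apply: Rmult_le_compat_r; lra.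
nra.
Qed.

Lemma card_M_of_lt :
  INR #|[set X in strings_with N A | Rltb (INR (M_of A X)) (mu - t)]|
  <= INR 'C(N, A) * exp (- (2 * r)).
Proof.
have [y_gt y_le] := ones_ratio_bounds; have y_mu := ones_ratio_mu.
have t_sqrt : 5 * sqrt (r * INR N) = t / 4 by rewrite /t; field.
have t_ge := t_ge20.
have [K_le K_gt] := INR_half_bounds N.
have N_gt0 : (0 < N)%nat by lia.
have mu_le : mu <= INR N by have := pos_INR N; nra.
have [mu_lt | mu_ge] := Rlt_le_dec (mu - t) 0.
  suff -> : [set X in strings_with N A | Rltb (INR (M_of A X)) (mu - t)] = set0.
    by rewrite cards0; apply: Rmult_le_pos; [apply: pos_INR | apply/Rlt_le/exp_pos].
  apply/setP => X; rewrite !inE; apply/negbTE/negP => /andP[_ /RltbP M_lt].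
  by have := pos_INR (M_of A X); lra.
have [m [m_le m_gt]] := INR_floor mu_ge.
have le_mN : (m <= N)%nat by apply/leP/INR_le; lra.
apply: (Rle_trans _ (INR #|heavy_prefix N true A m N./2.+1|)).
  apply/INR_leq/subset_leq_card/subsetP => X; rewrite inE => /andP[SX /RltbP M_lt].
  by apply: M_of_le_heavy_prefix => //; rewrite -ltnS; apply/ltP/INR_lt; rewrite S_INR; lra.
apply: card_heavy_prefix_le_exp => //.
rewrite t_sqrt S_INR.
have -> : INR m * INR A / INR N = INR m * (INR A / INR N) by field; apply: not_0_INR; lia.
have : INR m * (INR A / INR N) <= (mu - t) * (INR A / INR N) by apply: Rmult_le_compat_r; lra.
nra.
Qed.

End MedianTail.

Local Close Scope R_scope.

Lemma two_exp_le_Rpower2 (r : R) : (1 <= r)%R -> (2 * exp (- (2 * r)) <= Rpower 2 (- r))%R.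
Proof.
move=> r_ge1; rewrite /Rpower -{1}(exp_ln 2); last lra.
have ln2_le1 : (ln 2 <= 1)%R.
  apply: Rnot_lt_le => /exp_increasing; rewrite exp_ln; last lra.
  by have := exp_ineq1_le 1; lra.
rewrite -exp_plus; apply: exp_le; nra.
Qed.

Theorem mainTheorem9 :
  exists d : R,
  forall (A B : nat), (B <= A)%N -> (0 < A + B)%N ->
  forall r : R, (1 <= r)%R ->
  (@unif_prob (A + B) A
     (fun X => if Rlt_dec (d * sqrt (r * INR (A + B)))
                   (Rabs (INR (@M_of (A + B) A X) - (INR (A + B))^2 / (2 * INR A)))
               then true else false)
   <= Rpower 2 (- r))%R.
Proof.
exists 20%R => A B le_BA N_gt0 r r_ge1; rewrite /unif_prob.
move: (A + B)%N (leq_addr B A) (addKn A B) N_gt0 => N le_AN subNA N_gt0.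
set t := (20 * sqrt _)%R; set mu := (INR N ^ 2 / _)%R.
pose E := [set X in strings_with N A | Rltb t (Rabs (INR (M_of A X) - mu))].
change (INR #|E| / INR #|strings_with N A| <= Rpower 2 (- r))%R.
have C_gt0 : (0 < INR 'C(N, A))%R by apply/lt_0_INR/ltP; rewrite bin_gt0.
have C_le := INR_leq (bin_le_card_strings_with N A).
suff E_le : (INR #|E| <= INR 'C(N, A) * Rpower 2 (- r))%R.
  have pow_gt0 : (0 < Rpower 2 (- r))%R by apply: exp_pos.
  apply: (Rmult_le_reg_r (INR #|strings_with N A|)); first lra.
  rewrite /Rdiv Rmult_assoc Rinv_l; [nra | lra].
have [lt_BA | eq_BA] : (B < A \/ B = A)%N by lia.
  have E_sub : E \subset
      [set X in strings_with N A | Rltb (mu + t) (INR (M_of A X))] :|: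
      [set X in strings_with N A | Rltb (INR (M_of A X)) (mu - t)].
    apply/subsetP => X; rewrite !inE => /andP[-> /RltbP]; rewrite /=.
    case: (Rcase_abs (INR (M_of A X) - mu)) => [neg | nonneg].
      by rewrite Rabs_left // => ?; apply/orP; right; apply/RltbP; lra.
    by rewrite Rabs_right // => ?; apply/orP; left; apply/RltbP; lra.
  have lt_BA' : (N - A < A)%N by rewrite subNA.
  have := INR_leq (leq_trans (subset_leq_card E_sub) (leq_card_setU _ _)).
  rewrite INR_addn.
  have := card_M_of_gt lt_BA' le_AN r_ge1; have := card_M_of_lt lt_BA' le_AN r_ge1.
  have := two_exp_le_Rpower2 r_ge1; rewrite -/t -/mu; nra.
suff -> : E = set0 by rewrite cards0 /=; apply/Rmult_le_pos/Rlt_le/exp_pos; lra.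
apply/setP => X; rewrite !inE; apply/negbTE/negP => /andP[_ /RltbP].
have -> : M_of A X = N by rewrite /M_of subNA eq_BA ltnn.
have A_gt0 : (0 < INR A)%R by apply/lt_0_INR/ltP; lia.
have N_eq : INR N = (2 * INR A)%R by rewrite (_ : N = A + A)%N ?INR_addn; [ring | lia].
have -> : mu = INR N by rewrite /mu N_eq; field; lra.
by rewrite Rminus_diag Rabs_R0 /t; have := sqrt_pos (r * INR N); lra.
Qed.
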